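(* Let $0<s_1<1-s_1<s_2<1$. There is $\epsilon_0=\epsilon_0(s_1,s_2)>0$ such that for every $\epsilon\in(0,\epsilon_0)$ for which $m=\epsilon^{-1}/4$ is an integer there is $n_0$ with the following property: if $n\geq n_0$, $H\in Irr(m)$, and $G$ is an $n$-blowup of $H$, then every $\epsilon$-regular partition of $G$ has at least $\epsilon^{-s_2}$ parts.
   Context: Graphs $G=(V,E)$, $E\subseteq\binom V2$. $d_G(X,Y)=|\{(x,y)\in X\times Y:xy\in E\}|/(|X||Y|)$; $(X,Y)$ is $\epsilon$-regular if $|d_G(X,Y)-d_G(X',Y')|\le\epsilon$ for $X'\subseteq X,Y'\subseteq Y$ with $|X'|\ge\epsilon|X|,|Y'|\ge\epsilon|Y|$; a partition $\mathcal P$ of $V$ (not necessarily equitable; pairs $(X,X)$ allowed) is $\epsilon$-regular if at least $(1-\epsilon)|V|^2$ pairs of $V^2$ lie in $X\times Y$ for some $\epsilon$-regular $(X,Y)\in\mathcal P^2$. $Irr(m)$ is the set of graphs on $\{a_1,..,a_m,b_1,..,b_m\}$ ($2m$ distinct vertices) such that either $a_ib_j\in E$ iff $i\le j$ for all $i,j$, or $a_ib_j\in E$ iff $i=j$ for all $i,j$, or $a_ib_j\in E$ iff $i\ne j$ for all $i,j$. For a graph $H=(U,E)$, an $n$-blowup of $H$ is any graph with vertex set $\bigcup_{u\in U}V_u$ (disjoint, $|V_u|=n$) such that for $u\neq u'$, all pairs $xy$ with $x\in V_u,y\in V_{u'}$ are edges if $uu'\in E$ and non-edges if $uu'\notin E$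 (pairs inside a $V_u$ arbitrary). *)

From HB Require Import structures.
From mathcomp Require Import all_boot all_order all_algebra.
From mathcomp Require Import reals exp.
Set Implicit Arguments. Unset Strict Implicit. Unset Printing Implicit Defensive.
Import Order.TTheory GRing.Theory Num.Theory.
Local Open Scope ring_scope.

Section Graphs.
Variable R : realType.
Variable T : finType.

Definition is_graph (e : rel T) : Prop := symmetric e /\ irreflexive e.

Definition density (e : rel T) (X Y : {set T}) : R :=
  #|[set p in setX X Y | e p.1 p.2]|%:R / (#|X| * #|Y|)%:R.

Definition eps_regular_pair (eps : R) (e : rel T) (X Y : {set T}) : bool :=
  [forall X' : {set T}, forall Y' : {set T},
     [&& X' \subset X, Y' \subset Y, eps * #|X|%:R <= #|X'|%:R
       & eps * #|Y|%:R <= #|Y'|%:R] ==>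
     (`|density e X Y - density e X' Y'| <= eps)].

Definition eps_regular_partition (eps : R) (e : rel T) (P : {set {set T}}) : Prop :=
  partition P [set: T] /\
  (1 - eps) * (#|T| ^ 2)%:R <=
    #|[set p : T * T | [exists X in P, exists Y in P,
          [&& eps_regular_pair eps e X Y, p.1 \in X & p.2 \in Y]]]|%:R.

End Graphs.

(* vertex set {a_1..a_m, b_1..b_m}: a_i = inl i, b_j = inr j (0-indexed) *)
Definition irr_vertex (m : nat) : finType := ('I_m + 'I_m)%type.

Definition in_Irr (m : nat) (H : rel (irr_vertex m)) : Prop :=
  is_graph H /\
  ((forall i j : 'I_m, H (inl i) (inr j) = (i <= j)%N) \/
   (forall i j : 'I_m, H (inl i) (inr j) = (i == j)) \/
   (forall i j : 'I_m, H (inl i) (inr j) = (i != j))).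

(* G (on vertex set T) is an n-blowup of H (on U), the parts being the fibres
   V_u = f^-1(u), each of size n; pairs inside a fibre are arbitrary. *)
Definition is_blowup (U T : finType) (n : nat) (H : rel U) (G : rel T) (f : T -> U) : Prop :=
  (forall u : U, #|[set x | f x == u]| = n) /\
  (forall x y : T, f x != f y -> G x y = H (f x) (f y)).

From HB Require Import structures.
From mathcomp Require Import all_boot all_order all_algebra.
From mathcomp Require Import reals exp.
From mathcomp Require Import ring lra.
Import Order.TTheory GRing.Theory Num.Theory.
Local Open Scope ring_scope.

Set Implicit Arguments.
Unset Strict Implicit.
Unset Printing Implicit Defensive.

(* Call a part X heavy at a vertex u of H when |X :&: V_u| >= eps |X|.  As
   eps |V(G)| = n / 2, at least half of every fibre V_u lies in parts heavy at u.
   If X is heavy at the a_i for i in a set I with maximum r, then for j in I,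
   j < r, the vertices a_j and a_r disagree on b_j in every graph of Irr(m), so
   X is irregular with every part heavy at b_j; those parts have total size at
   least (|I| - 1) n / 2.  Writing h_X for the size of the union of the heavy
   a-fibres of X, this yields at least (h_X^2 - n h_X) / 2 irregular pairs with
   first vertex in X, while regularity allows at most eps |V(G)|^2 = m n^2 in
   total.  As sum_X h_X >= m n / 2, Cauchy-Schwarz gives m <= 16 |P|, that is
   |P| >= eps^-1 / 64, which exceeds eps^-s2 for small eps. *)

Lemma sqr_sum_le_card_sum_sqr (R : realFieldType) (I : finType) (A : {pred I})
    (a : I -> R) :
  (\sum_(i in A) a i) ^+ 2 <= #|A|%:R * \sum_(i in A) a i ^+ 2.
Proof.
set S := \sum_(i in A) a i; set Q := \sum_(i in A) a i ^+ 2.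
have row i :
    \sum_(j in A) (a i - a j) ^+ 2 = a i ^+ 2 *+ #|A| + Q - 2 * (a i * S).
  rewrite (eq_bigr (fun j => a i ^+ 2 + a j ^+ 2 - 2 * (a i * a j))); last first.
    by move=> j _; ring.
  by rewrite sumrB big_split /= sumr_const -!mulr_sumr.
have : 0 <= \sum_(i in A) \sum_(j in A) (a i - a j) ^+ 2.
  by do 2!apply: sumr_ge0 => ? _; apply: sqr_ge0.
under eq_bigr do rewrite row.
rewrite sumrB big_split /= sumr_const sumrMnl -mulr_sumr -mulr_suml -mulr_natl.
rewrite -/S -/Q expr2; lra.
Qed.

Section Partition.
Variables (T : finType) (P : {set {set T}}).
Hypothesis partP : partition P [set: T].

Lemma card_part_gt0 X : X \in P -> (0 < #|X|)%N.
Proof.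
case/and3P: partP => _ _ P0 XP; rewrite card_gt0.
by apply: contraNneq P0 => X0; rewrite -X0.
Qed.

Lemma sum_card_part : (\sum_(X in P) #|X|)%N = #|T|.
Proof. by rewrite -(card_partition partP) cardsT. Qed.

Lemma sum_card_partI (F : {set T}) : (\sum_(X in P) #|X :&: F|)%N = #|F|.
Proof.
transitivity (\sum_(X in P) \sum_(x in X | x \in F) 1)%N.
  by apply: eq_bigr => X _; rewrite sum1_card; apply: eq_card => x; rewrite !inE.
rewrite -(set_partition_big_cond P partP) sum1_card.
by apply: eq_card => x; rewrite unfold_in /= in_setT.
Qed.

Lemma card_pairs_pblock (Q : rel {set T}) :
  #|[set p : T * T | Q (pblock P p.1) (pblock P p.2)]| =
  (\sum_(X in P) \sum_(Y in P | Q X Y) #|X| * #|Y|)%N.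
Proof.
have trivP : trivIset P by case/and3P: partP.
have sum_parts (F : T -> nat) : (\sum_x F x = \sum_(X in P) \sum_(x in X) F x)%N.
  by rewrite -(set_partition_big P partP); apply: eq_bigl => x; rewrite inE.
rewrite -sum1_card big_mkcond /=.
transitivity (\sum_x \sum_y (Q (pblock P x) (pblock P y) : nat))%N.
  by rewrite pair_bigA; apply: eq_bigr => p _; rewrite inE; case: ifP.
rewrite sum_parts; apply: eq_bigr => X XP.
under eq_bigr => x xX do rewrite (def_pblock trivP XP xX).
rewrite sum_nat_const -big_distrr /=; congr (_ * _)%N.
rewrite sum_parts [RHS]big_mkcondr /=; apply: eq_bigr => Y YP.
under eq_bigr => y yY do rewrite (def_pblock trivP YP yY).
by rewrite sum_nat_const; case: (Q X Y); rewrite ?muln1 ?muln0.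
Qed.

End Partition.

Section Regularity.
Variables (R : realType) (T : finType) (G : rel T) (eps : R).

Definition eps_large (X X1 : {set T}) : bool :=
  (X1 \subset X) && (eps * #|X|%:R <= #|X1|%:R).

Lemma density_const (X Y : {set T}) (b : bool) :
  (0 < #|X|)%N -> (0 < #|Y|)%N -> {in X & Y, forall x y, G x y = b} ->
  density R G X Y = b%:R.
Proof.
move=> X0 Y0 GXY; rewrite /density.
have -> : [set p in setX X Y | G p.1 p.2] = if b then setX X Y else set0.
  apply/setP => -[x y]; move: GXY; case: b => GXY; rewrite !inE /=;
  by case xX: (x \in X); case yY: (y \in Y); rewrite //= GXY.
case: b {GXY}; last by rewrite cards0 mul0r.
by rewrite cardsX divff // pnatr_eq0 -lt0n muln_gt0 X0.
Qed.

Lemma eps_regular_pair_density (X Y X1 Y1 : {set T}) :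
  eps_regular_pair eps G X Y -> eps_large X X1 -> eps_large Y Y1 ->
  `|density R G X Y - density R G X1 Y1| <= eps.
Proof.
move=> /forallP/(_ X1)/forallP/(_ Y1)/implyP regXY /andP[sX1 lX1] /andP[sY1 lY1].
by apply: regXY; rewrite sX1 sY1 lX1.
Qed.

Lemma sum_irregular_le (P : {set {set T}}) : eps_regular_partition eps G P ->
  \sum_(X in P) \sum_(Y in P | ~~ eps_regular_pair eps G X Y) (#|X| * #|Y|)%:R
    <= eps * (#|T| ^ 2)%:R.
Proof.
move=> [partP cover_reg]; have trivP : trivIset P by case/and3P: partP.
set reg := fun X Y => eps_regular_pair eps G X Y.
set Reg := [set p : T * T | reg (pblock P p.1) (pblock P p.2)].
have -> : \sum_(X in P) \sum_(Y in P | ~~ reg X Y) (#|X| * #|Y|)%:R =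
    #|~: Reg|%:R :> R.
  rewrite (_ : ~: Reg = [set p : T * T | ~~ reg (pblock P p.1) (pblock P p.2)]).
    rewrite (card_pairs_pblock partP (fun X Y => ~~ reg X Y)) natr_sum.
    by under eq_bigr do rewrite natr_sum.
  by apply/setP => p; rewrite !inE.
have covered_reg : (1 - eps) * (#|T| ^ 2)%:R <= #|Reg|%:R.
  apply: le_trans cover_reg _; rewrite ler_nat; apply: subset_leq_card.
  apply/subsetP => p; rewrite !inE => /existsP[X /andP[XP /existsP[Y /andP[YP]]]].
  case/and3P=> regXY p1X p2Y.
  by rewrite (def_pblock trivP XP p1X) (def_pblock trivP YP p2Y).
have := cardsC Reg; rewrite card_prod mulnn => /(congr1 (GRing.natmul (1 : R))).
rewrite natrD; lra.
Qed.

End Regularity.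

Section Blowup.
Variables (U T : finType) (n : nat) (H : rel U) (G : rel T) (f : T -> U).

Definition fibre (u : U) : {set T} := [set x | f x == u].

Lemma sum_card_fibreI (X : {set T}) : (\sum_u #|X :&: fibre u|)%N = #|X|.
Proof.
rewrite -sum1_card (partition_big f xpredT) //=; apply: eq_bigr => u _.
by rewrite -sum1_card; apply: eq_bigl => x; rewrite !inE.
Qed.

Hypothesis blowupG : is_blowup n H G f.

Lemma card_fibre u : #|fibre u| = n.
Proof. by case: blowupG => card_f _; apply: card_f. Qed.

Lemma card_blowup : #|T| = (#|U| * n)%N.
Proof.
rewrite -cardsT -sum_card_fibreI.
by under eq_bigr do rewrite setTI card_fibre; rewrite sum_nat_const.
Qed.

Lemma density_fibres (R : realType) (X Y : {set T}) u v : u != v ->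
  X \subset fibre u -> Y \subset fibre v -> (0 < #|X|)%N -> (0 < #|Y|)%N ->
  density R G X Y = (H u v)%:R.
Proof.
move=> uv /subsetP sXu /subsetP sYv X0 Y0; apply: density_const => // x y xX yY.
move: (sXu x xX) (sYv y yY); rewrite !inE => /eqP fx /eqP fy.
by case: blowupG => _ ->; rewrite fx fy.
Qed.

Section Heavy.
Variables (R : realType) (eps : R) (P : {set {set T}}).
Hypothesis partP : partition P [set: T].

Definition heavy (X : {set T}) u : bool := eps * #|X|%:R <= #|X :&: fibre u|%:R.

Lemma heavy_mass_ge u : 0 <= eps ->
  n%:R - eps * #|T|%:R <= \sum_(X in P | heavy X u) #|X :&: fibre u|%:R.
Proof.
move=> eps_ge0.
have : n%:R = \sum_(X in P) #|X :&: fibre u|%:R :> R.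
  by rewrite -natr_sum sum_card_partI // card_fibre.
rewrite (bigID (heavy^~ u)) /= => ->; rewrite lerBlDr lerD2l.
apply: (@le_trans _ _ (\sum_(X in P | ~~ heavy X u) eps * #|X|%:R)).
  by apply: ler_sum => X /andP[_]; rewrite /heavy -ltNge => /ltW.
rewrite -mulr_sumr ler_wpM2l // -(sum_card_part partP) natr_sum.
rewrite [leRHS](bigID (heavy^~ u)) /= lerDr.
by apply: sumr_ge0 => X _; apply: ler0n.
Qed.

Lemma heavy_card_gt0 X u : 0 < eps -> X \in P -> heavy X u ->
  (0 < #|X :&: fibre u|)%N.
Proof.
move=> eps_gt0 XP; rewrite /heavy -(ltr0n R); apply: lt_le_trans.
by rewrite mulr_gt0 // ltr0n (card_part_gt0 partP).
Qed.

End Heavy.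

End Blowup.

Lemma in_Irr_diag_neq m (H : rel (irr_vertex m)) (j r : 'I_m) : in_Irr H ->
  (j < r)%N -> H (inl j) (inr j) != H (inl r) (inr j).
Proof.
move=> [_ H_def] jr; have rj : r != j by apply: contraTneq jr => ->; rewrite ltnn.
by case: H_def => [|[|]] H_def; rewrite !H_def ?leqnn ?eqxx ?rj // leqNgt jr.
Qed.

Lemma le_16_card_of_mass_bounds (R : realFieldType) (S Q k m n : R) :
  0 < m -> 0 < n -> 0 <= k ->
  m * (n / 2) <= S -> S <= 2 * m * n -> (Q - n * S) / 2 <= m * n ^+ 2 ->
  S ^+ 2 <= k * Q -> m <= 16 * k.
Proof.
move=> m_gt0 n_gt0 k_ge0 S_ge S_le Q_le CS.
have mn_ge0 : 0 <= m * (n / 2) by apply: mulr_ge0; lra.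
have S2_ge := ler_pM mn_ge0 mn_ge0 S_ge S_ge.
have nS_le : n * S <= n * (2 * m * n) by apply: ler_wpM2l; lra.
have kQ_le : k * Q <= k * (4 * m * n ^+ 2) by apply: ler_wpM2l => //; lra.
have : m * n ^+ 2 * (m - 16 * k) <= 0 by rewrite expr2 in CS kQ_le *; lra.
by rewrite pmulr_rle0 ?mulr_gt0 ?exprn_gt0 //; lra.
Qed.

Section IrrBlowup.
Variables (R : realType) (m n : nat) (H : rel (irr_vertex m)) (T : finType).
Variables (G : rel T) (f : T -> irr_vertex m) (eps : R) (P : {set {set T}}).
Hypothesis eps_m : eps * (4 * m%:R) = 1.
Hypothesis IrrH : in_Irr H.
Hypothesis blowupG : is_blowup n H G f.
Hypothesis partP : partition P [set: T].

Let heavy := heavy f eps.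
Let reg X Y := eps_regular_pair eps G X Y.

Lemma eps_gt0 : 0 < eps.
Proof.
have m_ge0 : 0 <= m%:R :> R := ler0n R m.
rewrite ltNge; apply/negP => eps_le0.
by have := mulr_le0_ge0 eps_le0 (mulr_ge0 (ler0n R 4) m_ge0); rewrite eps_m ler10.
Qed.

Lemma m_gt0 : (0 < m)%N.
Proof.
rewrite lt0n; apply: contraTneq (oner_neq0 R) => m0.
by rewrite -eps_m m0 mulr0 mulr0 eqxx.
Qed.

Lemma eps_lt_half : 2 * eps < 1.
Proof.
have m_ge1 : 1 <= m%:R :> R by rewrite ler1n m_gt0.
have := ler_wpM2l (ltW eps_gt0) (ler_wpM2l (ler0n R 4) m_ge1).
by rewrite eps_m mulr1; have := eps_gt0; lra.
Qed.

Lemma card_irr_blowup : #|T|%:R = 2 * m%:R * n%:R :> R.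
Proof. by rewrite (card_blowup blowupG) card_sum card_ord natrM natrD; ring. Qed.

Lemma eps_card : eps * #|T|%:R = n%:R / 2.
Proof.
rewrite card_irr_blowup.
transitivity (eps * (4 * m%:R) * (n%:R / 2)); first by field.
by rewrite eps_m mul1r.
Qed.

Lemma heavy_mass_half u :
  n%:R / 2 <= \sum_(X in P | heavy X u) #|X :&: fibre f u|%:R :> R.
Proof.
apply: le_trans (heavy_mass_ge blowupG partP u (ltW eps_gt0)).
by rewrite eps_card; lra.
Qed.

Lemma sum_card_fibreI_a X : (\sum_(i : 'I_m) #|X :&: fibre f (inl i)| <= #|X|)%N.
Proof. by rewrite -[leqRHS](sum_card_fibreI f) big_sumType leq_addr. Qed.

Lemma sum_card_fibreI_b X : (\sum_(j : 'I_m) #|X :&: fibre f (inr j)| <= #|X|)%N.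
Proof. by rewrite -[leqRHS](sum_card_fibreI f) big_sumType leq_addl. Qed.

Lemma heavy_conflict_irregular X Y i i' j : X \in P -> Y \in P ->
  heavy X (inl i) -> heavy X (inl i') -> heavy Y (inr j) ->
  H (inl i) (inr j) != H (inl i') (inr j) -> ~~ reg X Y.
Proof.
move=> XP YP hXi hXi' hYj neqH; apply/negP => regXY.
have near_H k : heavy X (inl k) ->
    `|density R G X Y - (H (inl k) (inr j))%:R| <= eps.
  move=> hXk; rewrite -(@density_fibres _ _ _ _ _ _ blowupG R
    (X :&: fibre f (inl k)) (Y :&: fibre f (inr j)))
    ?subsetIr ?(heavy_card_gt0 partP eps_gt0) //.
  by apply: eps_regular_pair_density; rewrite // /eps_large subsetIl.
move: (near_H _ hXi) (near_H _ hXi') neqH eps_lt_half.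
case: (H (inl i) _); case: (H (inl i') _) => //= + + _;
  by rewrite !ler_norml => /andP[? ?] /andP[? ?]; lra.
Qed.

Definition heavy_a X : {set 'I_m} := [set i | heavy X (inl i)].

Definition heavy_mass_a X : R :=
  \sum_(i in heavy_a X) #|X :&: fibre f (inl i)|%:R.

Lemma heavy_mass_a_ge0 X : 0 <= heavy_mass_a X.
Proof. by apply: sumr_ge0 => i _; apply: ler0n. Qed.

Lemma heavy_mass_a_le_card X : heavy_mass_a X <= #|X|%:R.
Proof.
apply: (@le_trans _ _ (\sum_(i : 'I_m) #|X :&: fibre f (inl i)|%:R)).
  by rewrite [leRHS](bigID (mem (heavy_a X))) /= lerDl; apply: sumr_ge0.
by rewrite -natr_sum ler_nat sum_card_fibreI_a.
Qed.

Lemma heavy_mass_a_le X : heavy_mass_a X <= #|heavy_a X|%:R * n%:R.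
Proof.
rewrite mulr_natl -sumr_const; apply: ler_sum => i _.
by rewrite ler_nat -(card_fibre blowupG (inl i)) subset_leq_card ?subsetIr.
Qed.

Lemma sum_card_irregular_ge X : X \in P ->
  (#|heavy_a X|%:R - 1) * (n%:R / 2) <=
    \sum_(Y in P | ~~ reg X Y) #|Y|%:R :> R.
Proof.
move=> XP.
have sum_ge0 : 0 <= \sum_(Y in P | ~~ reg X Y) #|Y|%:R :> R.
  by apply: sumr_ge0 => Y _; apply: ler0n.
have [->|[i0 i0X]] := set_0Vmem (heavy_a X).
  by rewrite cards0; have := ler0n R n; lra.
case: (@arg_maxnP _ i0 (mem (heavy_a X)) val i0X) => r /= rX r_max.
rewrite (cardsD1 r) rX natrD addrAC subrr add0r mulr_natl -sumr_const.
apply: (@le_trans _ _ (\sum_(j in heavy_a X :\ r)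
    \sum_(Y in P | heavy Y (inr j)) #|Y :&: fibre f (inr j)|%:R)).
  by apply: ler_sum => j _; apply: heavy_mass_half.
rewrite (exchange_big_dep (mem P)) /=; last by move=> j Y _ /andP[].
rewrite [leRHS]big_mkcondr /=; apply: ler_sum => Y YP.
case: (boolP (reg X Y)) => [regXY | _] /=.
  rewrite big1 // => j /andP[/setD1P[jr jX] /andP[_ hYj]].
  have jltr : (j < r)%N by rewrite ltn_neqAle r_max // andbT; exact: jr.
  move: jX rX; rewrite !inE => jX rX.
  have := heavy_conflict_irregular XP YP jX rX hYj (in_Irr_diag_neq IrrH jltr).
  by rewrite regXY.
apply: (@le_trans _ _ (\sum_(j : 'I_m) #|Y :&: fibre f (inr j)|%:R)).
  by rewrite big_mkcond /=; apply: ler_sum => j _; case: ifP.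
by rewrite -natr_sum ler_nat sum_card_fibreI_b.
Qed.

Lemma heavy_mass_a_sqr_le X : X \in P ->
  (heavy_mass_a X ^+ 2 - n%:R * heavy_mass_a X) / 2 <=
    \sum_(Y in P | ~~ reg X Y) (#|X| * #|Y|)%:R.
Proof.
move=> XP; under eq_bigr do rewrite natrM; rewrite -mulr_sumr.
have := sum_card_irregular_ge XP; have := heavy_mass_a_le X.
have := heavy_mass_a_le_card X; have := heavy_mass_a_ge0 X.
have : 0 <= \sum_(Y in P | ~~ reg X Y) #|Y|%:R :> R.
  by apply: sumr_ge0 => Y _; apply: ler0n.
move: (\sum_(Y in _ | _) _) (heavy_mass_a X) (#|X|%:R : R) (#|heavy_a X|%:R : R).
move=> s a x c s_ge0 a_ge0 a_le_x a_le_cn s_ge.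
have n_ge0 : 0 <= n%:R :> R := ler0n R n.
(* [x s >= a s >= a (c - 1) n / 2 >= (a^2 - n a) / 2] *)
have p1 : 0 <= a * (s - (c - 1) * (n%:R / 2)) by apply: mulr_ge0; lra.
have p2 : 0 <= s * (x - a) by apply: mulr_ge0; lra.
have p3 : 0 <= a * (c * n%:R - a) by apply: mulr_ge0; lra.
lra.
Qed.

Lemma sum_heavy_mass_a_ge : m%:R * (n%:R / 2) <= \sum_(X in P) heavy_mass_a X.
Proof.
rewrite /heavy_mass_a (exchange_big_dep xpredT) //= -[m in m%:R]card_ord.
rewrite mulr_natl -sumr_const; apply: ler_sum => i _.
rewrite (eq_bigl (fun X => (X \in P) && heavy X (inl i))) ?heavy_mass_half //.
by move=> X; rewrite inE.
Qed.

Lemma sum_heavy_mass_a_le : \sum_(X in P) heavy_mass_a X <= #|T|%:R.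
Proof.
rewrite -(sum_card_part partP) natr_sum.
by apply: ler_sum => X _; apply: heavy_mass_a_le_card.
Qed.

Lemma card_part_ge : eps_regular_partition eps G P -> (0 < n)%N ->
  m%:R <= 16 * #|P|%:R :> R.
Proof.
move=> regP n_gt0.
have irregular_le : eps * (#|T| ^ 2)%:R = m%:R * n%:R ^+ 2 :> R.
  rewrite natrX card_irr_blowup.
  transitivity (eps * (4 * m%:R) * (m%:R * n%:R ^+ 2)); first by ring.
  by rewrite eps_m mul1r.
apply: (@le_16_card_of_mass_bounds _ (\sum_(X in P) heavy_mass_a X)
  (\sum_(X in P) heavy_mass_a X ^+ 2) _ _ n%:R).
- by rewrite ltr0n m_gt0.
- by rewrite ltr0n.
- exact: ler0n.
- exact: sum_heavy_mass_a_ge.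
- by rewrite -card_irr_blowup sum_heavy_mass_a_le.
- rewrite -irregular_le; apply: le_trans (sum_irregular_le regP).
  rewrite mulr_sumr -sumrB mulr_suml; apply: ler_sum => X XP.
  exact: heavy_mass_a_sqr_le.
- exact: sqr_sum_le_card_sum_sqr.
Qed.

End IrrBlowup.

Lemma powR_le_of_le_root (R : realType) (x c r : R) : 0 < r -> 0 <= c ->
  0 <= x -> x <= powR c r^-1 -> powR x r <= c.
Proof.
move=> r_gt0 c_ge0 x_ge0 x_le.
apply: (@le_trans _ _ (powR (powR c r^-1) r)).
  by apply: ge0_ler_powR; rewrite ?nnegrE ?powR_ge0 ?(ltW r_gt0).
by rewrite -powRrM mulVf ?powRr1 ?gt_eqF.
Qed.

Lemma powRN_le_div (R : realType) (x s c : R) : 0 < x ->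
  powR x (1 - s) <= c -> powR x (- s) <= c / x.
Proof.
move=> x_gt0 le_c; have -> : - s = (1 - s) + (-1) by ring.
rewrite powRD; last by apply/implyP => _; rewrite gt_eqF.
by rewrite powR_inv1 ?(ltW x_gt0) // ler_pM2r ?invr_gt0.
Qed.

Theorem lemma3p31 (R : realType) (s1 s2 : R) :
  0 < s1 -> s1 < 1 - s1 -> 1 - s1 < s2 -> s2 < 1 ->
  exists eps0 : R, 0 < eps0 /\
    forall (eps : R) (m : nat), 0 < eps -> eps < eps0 -> eps^-1 / 4 = m%:R ->
    exists n0 : nat, forall n : nat, (n0 <= n)%N ->
      forall H : rel (irr_vertex m), in_Irr H ->
      forall (T : finType) (G : rel T) (f : T -> irr_vertex m),
        is_graph G -> is_blowup n H G f ->
        forall P : {set {set T}}, eps_regular_partition eps G P ->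
          powR eps (- s2) <= #|P|%:R.
Proof.
move=> _ _ _ s2_lt1; have r_gt0 : 0 < 1 - s2 by rewrite subr_gt0.
exists (powR (1 / 64) (1 - s2)^-1); split; first by apply: powR_gt0; lra.
move=> eps m eps_gt0 eps_lt m_def.
have eps_m : eps * (4 * m%:R) = 1 by rewrite -m_def; field; rewrite gt_eqF.
exists 1%N => n n_gt0 H IrrH T G f _ blowupG P regP.
have m_le := card_part_ge eps_m IrrH blowupG regP.1 regP n_gt0.
have eps_pow : powR eps (1 - s2) <= 1 / 64.
  by apply: powR_le_of_le_root r_gt0 _ (ltW eps_gt0) (ltW eps_lt); lra.
apply: le_trans (powRN_le_div eps_gt0 eps_pow) _.
have -> : 1 / 64 / eps = eps^-1 / 4 / 16 by field; rewrite gt_eqF.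
by rewrite m_def; lra.
Qed.
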